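(* Let $F$ be a field of characteristic $p>0$ and let $\phi,\psi$ be $p$-forms over $F$ with $\dim\phi=\dim\psi$. Let $L/F$ be a separable algebraic field extension. Then $\phi$ and $\psi$ are similar over $F$ if and only if $\phi_L$ and $\psi_L$ are similar over $L$.
   Context: A $p$-form on a finite-dimensional $F$-vector space $V$ is a map $\phi:V\to F$ with $\phi(x+y)=\phi(x)+\phi(y)$ and $\phi(\lambda x)=\lambda^p\phi(x)$ for all $x,y\in V$ and $\lambda\in F$. Equivalently, in a suitable basis, $\phi=a_1x_1^p+\dots+a_nx_n^p$ with $a_i\in F$. Two $p$-forms $\phi$ on $V$ and $\psi$ on $W$ are isometric if there is a linear bijection $T:V\to W$ with $\psi\circ T=\phi$. They are similar if $\phi\cong c\psi$ for some $c\in F^*$. The subscript $L$ denotes scalar extension to $L$. *)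

From HB Require Import structures.
From mathcomp Require Import all_boot all_order all_algebra.
From mathcomp Require Import separable.
Set Implicit Arguments. Unset Strict Implicit. Unset Printing Implicit Defensive.
Import GRing.Theory.
Local Open Scope ring_scope.

(* A p-form on the n-dimensional space F^n (row vectors), written in the
   standard basis: phi(x) = \sum_i a_i x_i^p, with coefficients a : 'I_n -> F.
   (Every p-form on F^n has this shape, with a_i = phi(e_i).) *)
Definition pform_eval (F : fieldType) (p n : nat) (a : 'I_n -> F)
  (x : 'rV[F]_n) : F := \sum_(i < n) a i * (x 0 i) ^+ p.

Definition pform_isometric (F : fieldType) (p n : nat) (a b : 'I_n -> F) : Prop :=
  exists T : 'M[F]_n, T \in unitmx /\
    forall x : 'rV[F]_n, pform_eval p b (x *m T) = pform_eval p a x.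

Definition pform_similar (F : fieldType) (p n : nat) (a b : 'I_n -> F) : Prop :=
  exists c : F, c != 0 /\ pform_isometric p a (fun i => c * b i).

Definition pform_ext (F L : fieldType) (iota : {rmorphism F -> L}) (n : nat)
  (a : 'I_n -> F) : 'I_n -> L := fun i => iota (a i).

Definition separable_algebraic_ext (F L : fieldType) (iota : {rmorphism F -> L}) : Prop :=
  forall x : L, exists q : {poly F},
    [/\ q != 0, separable_poly q & root (map_poly iota q) x].

(* A p-form sum_i a_i x_i^p is K^p-linear algebra in disguise: phi_a and phi_b
   are isometric iff a is an invertible p-substitution of b, a_i =
   sum_j T_ij^p b_j (pform_isometricP).

   Only descent to F is nontrivial; it rests on two facts:
   - linear disjointness (pfree_rmorph): a p-free family over F stays p-free
     over L.  For one separable generator x this is the statement that x^p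
     satisfies no polynomial smaller than the minimal polynomial of x
     (frobenius_annihilator_size); in general one inducts over the
     generators of a finitely generated subring.
   - descent of scalars (scaled_pspan_descent): if x*u is in the L^p-span of
     w with x in L^*, then c*u is in the F^p-span of w for some c in F^*.
     Here x is a polynomial in x^p (separable_frobenius_poly); this turns
     the condition into a linear system defined over F (a transporter),
     and a suitable solution over F provides c. *)

From mathcomp Require Import all_boot all_order all_algebra.
From mathcomp Require Import separable fieldext.
From Stdlib Require Import Classical IndefiniteDescription.
From mathcomp Require Import ring zify.
Set Implicit Arguments. Unset Strict Implicit. Unset Printing Implicit Defensive.
Import GRing.Theory.
Local Open Scope ring_scope.

Section PLinearAlgebra.
Variables (K : fieldType) (p : nat).
Hypothesis pK : p \in [pchar K].

Lemma pchar_gt0 : (0 < p)%N.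
Proof. exact: prime_gt0 (pcharf_prime pK). Qed.

Lemma expr0p : 0 ^+ p = 0 :> K.
Proof. by rewrite expr0n gtn_eqF ?pchar_gt0. Qed.

Lemma frobN (a : K) : (- a) ^+ p = - a ^+ p.
Proof. by rewrite -!(pFrobenius_autE pK) rmorphN. Qed.

Lemma frobB (a b : K) : (a - b) ^+ p = a ^+ p - b ^+ p.
Proof. by rewrite -!(pFrobenius_autE pK) rmorphB. Qed.

Lemma frob_sum I (r : seq I) (P : pred I) (f : I -> K) :
  (\sum_(i <- r | P i) f i) ^+ p = \sum_(i <- r | P i) f i ^+ p.
Proof. by rewrite -(pFrobenius_autE pK) rmorph_sum; apply: eq_bigr => i _. Qed.

(* The p-combination of the family w with coefficients k: an element of the
   K^p-span of w, where K^p is the subfield of p-th powers. *)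
Definition pcomb r (k w : 'I_r -> K) : K := \sum_(l < r) k l ^+ p * w l.

Definition pspan r (w : 'I_r -> K) (y : K) : Prop := exists k, y = pcomb k w.

(* w is p-free: linearly independent over K^p. *)
Definition pfree r (w : 'I_r -> K) : Prop :=
  forall k, pcomb k w = 0 -> forall l, k l = 0.

Lemma pcomb_scale r (k w : 'I_r -> K) c :
  c * pcomb k w = pcomb k (fun l => c * w l).
Proof. by rewrite /pcomb mulr_sumr; apply: eq_bigr => l _; rewrite mulrCA. Qed.

Lemma pcombB r (k k' w : 'I_r -> K) :
  pcomb (fun l => k l - k' l) w = pcomb k w - pcomb k' w.
Proof.
by rewrite /pcomb -sumrB; apply: eq_bigr => l _; rewrite frobB mulrBl.
Qed.

Lemma pfree_inj r (w : 'I_r -> K) : pfree w ->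
  forall k k', pcomb k w = pcomb k' w -> forall l, k l = k' l.
Proof.
move=> wfree k k' e l; apply/eqP; rewrite -subr_eq0; apply/eqP.
by apply: (wfree (fun l => k l - k' l)); rewrite pcombB e subrr.
Qed.

Lemma pcomb_mul m n r (A : 'M[K]_(m, n)) (B : 'M[K]_(n, r)) v w :
  (forall j, v j = pcomb (B j) w) ->
  forall i, pcomb (A i) v = pcomb ((A *m B) i) w.
Proof.
move=> vB i; rewrite /pcomb.
under eq_bigr => j _ do rewrite vB /pcomb mulr_sumr.
rewrite exchange_big /=; apply: eq_bigr => l _.
rewrite mxE frob_sum mulr_suml; apply: eq_bigr => j _.
by rewrite exprMn mulrA.
Qed.

Lemma pcomb_mulmx m n r (A : 'M[K]_(m, n)) (B : 'M[K]_(n, r)) w i :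
  pcomb ((A *m B) i) w = pcomb (A i) (fun j => pcomb (B j) w).
Proof. by rewrite (pcomb_mul _ (fun j => erefl)). Qed.

Lemma pcomb_row m r (A : 'M[K]_(m, r)) i w : pcomb (row i A 0) w = pcomb (A i) w.
Proof. by apply: eq_bigr => l _; rewrite mxE. Qed.

Lemma pcomb1 n (w : 'I_n -> K) j : pcomb ((1%:M : 'M[K]_n) j) w = w j.
Proof.
rewrite /pcomb (bigD1 j) //= big1 => [|l lj].
  by rewrite mxE eqxx expr1n mul1r addr0.
by rewrite mxE eq_sym (negbTE lj) expr0p mul0r.
Qed.

Lemma pcomb_invmx n (T : 'M[K]_n) (v w : 'I_n -> K) : T \in unitmx ->
  (forall j, v j = pcomb (T j) w) -> forall i, w i = pcomb (invmx T i) v.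
Proof.
by move=> Tu vT i; rewrite (pcomb_mul _ vT) mulVmx // pcomb1.
Qed.

Lemma pcoord_mx m r (w : 'I_r -> K) (u : 'I_m -> K) :
  (forall i, pspan w (u i)) ->
  exists C : 'M[K]_(m, r), forall i, u i = pcomb (C i) w.
Proof.
move=> /functional_choice[C uC]; exists (\matrix_(i, l) C i l) => i.
by rewrite uC; apply: eq_bigr => l _; rewrite mxE.
Qed.

End PLinearAlgebra.

Lemma pcomb_rmorph (F L : fieldType) (f : {rmorphism F -> L}) p r (k w : 'I_r -> F) :
  pcomb p (fun l => f (k l)) (fun l => f (w l)) = f (pcomb p k w).
Proof. by rewrite rmorph_sum; apply: eq_bigr => l _; rewrite rmorphM rmorphXn. Qed.

Lemma pcomb_map_mx (F L : fieldType) (f : {rmorphism F -> L}) p m r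
    (A : 'M[F]_(m, r)) i (w : 'I_r -> F) :
  pcomb p (map_mx f A i) (fun l => f (w l)) = f (pcomb p (A i) w).
Proof. by rewrite -pcomb_rmorph; apply: eq_bigr => l _; rewrite mxE. Qed.

Section PBasis.
Variables (K : fieldType) (p : nat).
Hypothesis pK : p \in [pchar K].
Local Notation pcomb := (pcomb p).
Local Notation pspan := (pspan p).
Local Notation pfree := (pfree p).

Definition rcons_fam r (w : 'I_r -> K) (y : K) (l : 'I_r.+1) : K :=
  if unlift ord_max l is Some l' then w l' else y.

Lemma pcomb_rcons r (k w : 'I_r.+1 -> K) :
  pcomb k w = pcomb (fun l => k (widen_ord (leqnSn r) l))
                    (fun l => w (widen_ord (leqnSn r) l)) + k ord_max ^+ p * w ord_max.
Proof. by rewrite /pcomb big_ord_recr. Qed.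

Lemma widen_lift_max r (l : 'I_r) : widen_ord (leqnSn r) l = lift ord_max l.
Proof. by apply: val_inj; rewrite /= /bump leqNgt ltn_ord. Qed.

Lemma rcons_fam_widen r (w : 'I_r -> K) y l :
  rcons_fam w y (widen_ord (leqnSn r) l) = w l.
Proof. by rewrite widen_lift_max /rcons_fam liftK. Qed.

Lemma rcons_fam_max r (w : 'I_r -> K) y : rcons_fam w y ord_max = y.
Proof. by rewrite /rcons_fam unlift_none. Qed.

Lemma pfree_rcons r (w : 'I_r -> K) y :
  pfree w -> ~ pspan w y -> pfree (rcons_fam w y).
Proof.
move=> wfree yout k ek.
have {}ek : pcomb (fun l => k (widen_ord (leqnSn r) l)) w + k ord_max ^+ p * y = 0.
  rewrite -ek pcomb_rcons rcons_fam_max; congr (_ + _).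
  by apply: eq_bigr => l _; rewrite rcons_fam_widen.
have kmax : k ord_max = 0.
  have [//|kn] := eqVneq (k ord_max) 0; case: yout.
  exists (fun l => - (k (widen_ord (leqnSn r) l) / k ord_max)).
  apply: (mulfI (expf_neq0 p kn)).
  rewrite (_ : k ord_max ^+ p * y = - pcomb (fun l => k (widen_ord (leqnSn r) l)) w).
    rewrite /pcomb mulr_sumr -sumrN; apply: eq_bigr => l _.
    rewrite (frobN pK) exprMn exprVn.
    by field; rewrite expf_neq0.
  by apply/eqP; rewrite -addr_eq0 addrC ek.
rewrite kmax (expr0p pK) mul0r addr0 in ek.
move=> l; case: (unliftP ord_max l) => [l'|] ->; last by [].
rewrite -widen_lift_max; exact: (wfree _ ek).
Qed.

Lemma pspan_rcons r (w : 'I_r -> K) y z :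
  pspan w z -> pspan (rcons_fam w y) z.
Proof.
move=> [k ->]; exists (fun l => if unlift ord_max l is Some l' then k l' else 0).
rewrite pcomb_rcons unlift_none (expr0p pK) mul0r addr0.
by apply: eq_bigr => l _; rewrite rcons_fam_widen widen_lift_max liftK.
Qed.

Lemma pspan_rcons_last r (w : 'I_r -> K) y : pspan (rcons_fam w y) y.
Proof.
exists (fun l => (l == ord_max)%:R).
rewrite pcomb_rcons rcons_fam_max eqxx expr1n mul1r /pcomb big1 ?add0r // => l _.
by rewrite widen_lift_max eq_sym (negbTE (neq_lift _ _)) (expr0p pK) mul0r.
Qed.

Lemma pfree_basis (s : seq K) :
  exists r (w : 'I_r -> K), pfree w /\ {in s, forall y, pspan w y}.
Proof.
elim: s => [|y s [r [w [wfree sw]]]].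
  by exists 0%N, (fun=> 0); split=> // k _ [].
have [yin | yout] := classic (pspan w y).
  by exists r, w; split=> // z; rewrite inE => /predU1P[->|/sw].
exists r.+1, (rcons_fam w y); split; first exact: pfree_rcons.
move=> z; rewrite inE => /predU1P[->|/sw]; first exact: pspan_rcons_last.
exact: pspan_rcons.
Qed.

End PBasis.

Section PFormIsometry.
Variables (K : fieldType) (p : nat).
Hypothesis pK : p \in [pchar K].
Local Notation pcomb := (pcomb p).

Lemma pform_evalE n (a : 'I_n -> K) x : pform_eval p a x = pcomb (x 0) a.
Proof. by apply: eq_bigr => i _; rewrite mulrC. Qed.

Lemma pform_isometricP n (a b : 'I_n -> K) :
  pform_isometric p a b <->
  exists2 T : 'M[K]_n, T \in unitmx & forall i, a i = pcomb (T i) b.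
Proof.
split=> [[T [Tu hT]] | [T Tu aT]].
  exists T => // i; transitivity (pcomb (row i 1%:M 0) a).
    by rewrite -[LHS](pcomb1 pK a i); apply: eq_bigr => j _; rewrite !mxE.
  rewrite -pform_evalE -hT -row_mul mul1mx pform_evalE.
  by apply: eq_bigr => j _; rewrite mxE.
exists T; split=> // x; rewrite !pform_evalE (pcomb_mul pK _ aT).
by apply: eq_bigr => j _.
Qed.

Lemma pform_similarP n (a b : 'I_n -> K) :
  pform_similar p a b <->
  exists c, c != 0 /\ exists2 T : 'M[K]_n, T \in unitmx &
     forall i, a i = pcomb (T i) (fun j => c * b j).
Proof.
by split=> -[c [c0 h]]; exists c; split=> //; apply/pform_isometricP.
Qed.

Lemma pcomb_coord_eq0 n r (om : 'I_r -> K) (a : 'I_n -> K) (W : 'M[K]_(n, r))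
    (v : 'rV[K]_n) :
  pfree p om -> (forall i, a i = pcomb (W i) om) ->
  (pcomb (v 0) a == 0) = (v *m W == 0).
Proof.
move=> omfree aW; rewrite (pcomb_mul pK _ aW); apply/eqP/eqP => [vW0 | ->].
  by apply/rowP => l; rewrite [RHS]mxE; exact: (omfree _ vW0 l).
by rewrite /pcomb big1 // => l _; rewrite mxE (expr0p pK) mul0r.
Qed.

(* Multiplying the a_i by c != 0 does not change which p-combinations
   vanish, hence not the rank of the coordinate matrix. *)
Lemma coord_rank_scale n r (om : 'I_r -> K) (a : 'I_n -> K) (W V : 'M[K]_(n, r))
    (c : K) :
  pfree p om -> c != 0 ->
  (forall i, a i = pcomb (W i) om) -> (forall i, c * a i = pcomb (V i) om) ->
  \rank W = \rank V.
Proof.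
move=> omfree c0 aW aV.
have kerWV (v : 'rV[K]_n) : (v *m W == 0) = (v *m V == 0).
  rewrite -(pcomb_coord_eq0 v omfree aW) -(pcomb_coord_eq0 v omfree aV).
  by rewrite -pcomb_scale mulf_eq0 (negbTE c0).
have kerE : (kermx W == kermx V)%MS.
  apply/andP; split; apply/sub_kermxP/row_matrixP => i;
    rewrite row_mul row0; apply/eqP; [rewrite -kerWV | rewrite kerWV];
    by rewrite -row_mul mulmx_ker row0.
have := eqmx_rank kerE; rewrite !mxrank_ker.
have := rank_leq_row W; have := rank_leq_row V; lia.
Qed.

(* If c*b lies in the K^p-span of a and c'*a in that of b (c, c' != 0), the
   two spans have the same dimension, so c*b is an invertible
   p-substitution of a. *)
Lemma mutual_pspan_unitmx n (a b : 'I_n -> K) (c c' : K) (R R' : 'M[K]_n) :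
  c != 0 -> c' != 0 ->
  (forall j, c * b j = pcomb (R j) a) -> (forall i, c' * a i = pcomb (R' i) b) ->
  exists2 T : 'M[K]_n, T \in unitmx & forall j, c * b j = pcomb (T j) a.
Proof.
move=> c0 c'0 bR aR'.
have [r [om [omfree spanned]]] := pfree_basis pK
  ([seq a i | i <- enum 'I_n] ++ [seq c * b j | j <- enum 'I_n]).
have [W aW] : exists W : 'M[K]_(n, r), forall i, a i = pcomb (W i) om.
  apply: pcoord_mx => i; apply: spanned.
  by rewrite mem_cat; apply/orP; left; apply: map_f; rewrite mem_enum.
have [U bU] : exists U : 'M[K]_(n, r), forall j, c * b j = pcomb (U j) om.
  apply: pcoord_mx => j; apply: spanned.
  by rewrite mem_cat; apply/orP; right; apply: map_f; rewrite mem_enum.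
have UE : U = R *m W.
  apply/matrixP => j l; apply: (pfree_inj pK omfree) l.
  by rewrite -bU bR (pcomb_mul pK _ aW).
have aV i : c * c' * a i = pcomb ((R' *m U) i) om.
  by rewrite -mulrA aR' pcomb_scale (pcomb_mul pK _ bU).
have rkWV := coord_rank_scale omfree (mulf_neq0 c0 c'0) aW aV.
have sUW : (U <= W)%MS by rewrite UE submxMl.
have rkUW : \rank U = \rank W.
  by apply/eqP; rewrite eqn_leq mxrankS //= rkWV mxrankM_maxr.
have /eqmxMunitP[T Tu UT] : (U == W)%MS by rewrite -(mxrank_leqif_eq sUW).2 rkUW.
by exists T => // j; rewrite bU UT -(pcomb_mul pK _ aW).
Qed.

End PFormIsometry.

(* A separable polynomial P dividing a polynomial G with zero derivative
   divides it to the p-th power: differentiating G = U * P^e shows that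
   P | e * U * P', hence P | U when e < p, by coprimality of P and P'. *)
Lemma separable_pow_dvdp (K : fieldType) (p : nat) (P G : {poly K}) :
  p \in [pchar K] -> P != 0 -> separable_poly P -> P %| G -> G^`() = 0 ->
  P ^+ p %| G.
Proof.
move=> pK P0 sepP PG dG.
suff : forall e, (e <= p)%N -> P ^+ e %| G by apply.
elim=> [|e IHe] lt_e_p; first by rewrite expr0 dvd1p.
have {IHe} /dvdpP[U defG] := IHe (ltnW lt_e_p).
case: e lt_e_p defG => [|e] lt_e_p defG; first by rewrite expr1.
have dU : U^`() * P + (e.+1)%:R *: (U * P^`()) = 0.
  apply: (mulfI (expf_neq0 e P0)).
  rewrite mulr0 -dG defG derivM deriv_exp /= scaler_nat !exprS; ring.
have PdU : P %| (e.+1)%:R *: (U * P^`()).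
  have -> : (e.+1)%:R *: (U * P^`()) = - (U^`() * P).
    by apply/eqP; rewrite -addr_eq0 addrC dU.
  by rewrite dvdpNr dvdp_mull.
have e1_neq0 : (e.+1)%:R != 0 :> K.
  rewrite -(dvdn_pcharf pK); apply/negP => /(dvdn_leq (ltn0Sn e)).
  by rewrite leqNgt lt_e_p.
have sepP' : coprimep P P^`() by move: sepP; rewrite unlock.
move: PdU; rewrite dvdpZr // (Gauss_dvdpl _ sepP') => PU.
by rewrite defG exprS dvdp_mul.
Qed.

Section MinimalAnnihilator.
Variables (M L : fieldType) (j : {rmorphism M -> L}) (x : L).

Definition annihilates (Q : {poly M}) : bool := root (map_poly j Q) x.

Definition min_annihilator (P : {poly M}) : Prop :=
  [/\ P != 0, annihilates P &
      forall Q, Q != 0 -> annihilates Q -> (size P <= size Q)%N].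

Lemma min_annihilator_exists q :
  q != 0 -> annihilates q -> exists P, min_annihilator P.
Proof.
move=> q0 qx; have [n le_q_n] : exists n, (size q <= n)%N by exists (size q).
elim: n q le_q_n q0 qx => [|n IHn] Q sQ Q0 Qx.
  by move: Q0; rewrite -size_poly_eq0 -leqn0 sQ.
have [[Q' [Q'0 Q'x lt_Q'_Q]] | smallest] :=
  classic (exists Q', [/\ Q' != 0, annihilates Q' & (size Q' < size Q)%N]).
  by apply: (IHn Q') => //; rewrite -ltnS (leq_trans lt_Q'_Q).
exists Q; split=> // Q' Q'0 Q'x; rewrite leqNgt; apply/negP => lt_Q'_Q.
by apply: smallest; exists Q'.
Qed.

Lemma horner_modp P C :
  annihilates P -> (map_poly j C).[x] = (map_poly j (C %% P)).[x].
Proof.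
move=> /eqP Px; rewrite {1}(divp_eq C P) rmorphD rmorphM /= hornerD hornerM.
by rewrite Px mulr0 add0r.
Qed.

Lemma min_annihilator_dvdp P Q : min_annihilator P -> annihilates Q -> P %| Q.
Proof.
move=> [P0 Px Pmin] Qx; apply/modp_eq0P; apply: contraTeq (ltn_modpN0 Q P0).
move=> QP0; rewrite -leqNgt; apply: Pmin => //.
by rewrite /annihilates /root -horner_modp.
Qed.

End MinimalAnnihilator.

Lemma rVpoly_sum (K : fieldType) r (v : 'rV[K]_r) :
  rVpoly v = \sum_(l < r) v 0 l *: 'X^l.
Proof.
rewrite -[v in LHS]mulmx1 mulmx_sum_row linear_sum; apply: eq_bigr => l _.
by rewrite linearZ /= row1 rVpoly_delta.
Qed.

Section SeparableElement.
Variables (M L : fieldType) (j : {rmorphism M -> L}) (p : nat) (x : L).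
Hypothesis pM : p \in [pchar M].
Variable q : {poly M}.
Hypotheses (q_neq0 : q != 0) (q_sep : separable_poly q) (qx : annihilates j x q).

Lemma separable_min_annihilator :
  exists2 P, min_annihilator j x P & separable_poly P.
Proof.
have [P Pmin] := min_annihilator_exists q_neq0 qx.
exists P; [exact: Pmin | exact: dvdp_separable (min_annihilator_dvdp Pmin qx) q_sep].
Qed.

(* Key lemma: no nonzero polynomial smaller than the minimal annihilator P of
   x vanishes at x^p, since H(X^p) annihilates x and has zero derivative, so
   that P^p divides it. *)
Lemma frobenius_annihilator_size P H :
  min_annihilator j x P -> separable_poly P ->
  H != 0 -> annihilates j (x ^+ p) H -> (size P <= size H)%N.
Proof.
move=> Pmin sepP H0 Hxp; have [P0 _ _] := Pmin.
have p_gt1 : (1 < p)%N := prime_gt1 (pcharf_prime pM).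
pose G := H \Po 'X^p.
have Gx : annihilates j x G.
  by rewrite /annihilates map_comp_poly rootE horner_comp map_polyXn hornerXn.
have dG : G^`() = 0.
  rewrite deriv_comp derivXn -mulr_natl -polyC_natr (pcharf0 pM).
  by rewrite !(mul0r, mulr0).
have G0 : G != 0.
  rewrite -lead_coef_eq0 lead_coef_comp; last by rewrite size_polyXn ltnS ltnW.
  by rewrite (lead_coefXn M) expr1n mulr1 lead_coef_eq0.
have := dvdp_leq G0 (separable_pow_dvdp pM P0 sepP (min_annihilator_dvdp Pmin Gx) dG).
rewrite (polySpred (expf_neq0 p P0)) (polySpred G0) ltnS size_exp.
rewrite /G size_comp_poly size_polyXn /= leq_pmul2r ?prime_gt0 ?(pcharf_prime pM) //.
have : (0 < size H)%N by rewrite size_poly_gt0.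
by case: (size H) => // h _; case: (size P).
Qed.

Lemma frobenius_horner C : ((map_poly j C).[x]) ^+ p =
  (map_poly j (map_poly (pFrobenius_aut pM) C)).[x ^+ p].
Proof.
have pL := rmorph_pchar j pM.
rewrite -!pFrobenius_autE -(horner_map (pFrobenius_aut pL)) -!map_poly_comp.
congr (_.[_]); apply: eq_map_poly => m /=.
by rewrite !pFrobenius_autE rmorphXn.
Qed.

(* The coefficients, reduced
   modulo P, combine into a polynomial of size < size P vanishing at x^p. *)
Lemma pfree_adjoin r (g : 'I_r -> M) (c : 'I_r -> {poly M}) :
  pfree p g -> pcomb p (fun l => (map_poly j (c l)).[x]) (fun l => j (g l)) = 0 ->
  forall l, (map_poly j (c l)).[x] = 0.
Proof.
move=> gfree cg0.
have [P Pmin sepP] := separable_min_annihilator; have [P0 Px _] := Pmin.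
pose c' l := c l %% P.
have c'E l : (map_poly j (c l)).[x] = (map_poly j (c' l)).[x] := horner_modp _ Px.
pose H := \sum_l map_poly (pFrobenius_aut pM) (c' l) * (g l)%:P.
have coefH k : H`_k = pcomb p (fun l => (c' l)`_k) g.
  by rewrite coef_sum; apply: eq_bigr => l _; rewrite coefMC coef_map.
have Hxp : annihilates j (x ^+ p) H.
  rewrite /annihilates /root rmorph_sum horner_sum; apply/eqP; rewrite -[RHS]cg0.
  apply: eq_bigr => l _; rewrite c'E frobenius_horner rmorphM /= hornerM.
  by rewrite map_polyC hornerC.
have sizeH : (size H < size P)%N.
  have P_gt0 : (0 < size P)%N by rewrite size_poly_gt0.
  rewrite -(prednK P_gt0) ltnS; apply/leq_sizeP => k le_k.
  rewrite coefH /pcomb big1 // => l _.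
  rewrite nth_default ?(expr0p pM) ?mul0r //; apply: leq_trans le_k.
  by rewrite -ltnS (prednK P_gt0) ltn_modpN0.
have H0 : H = 0.
  apply/eqP; apply: contraTT sizeH => H0; rewrite -leqNgt.
  exact: frobenius_annihilator_size.
move=> l; rewrite c'E (_ : c' l = 0) ?rmorph0 ?horner0 //.
apply/polyP => k; rewrite coef0; apply: (gfree (fun l => (c' l)`_k)).
by rewrite -coefH H0 coef0.
Qed.

(* A separable element is a polynomial in its p-th power: x \in M(x^p).
   Evaluation at x^p of polynomials of size < size P is injective, hence
   onto the (size P).-1-dimensional space M[x]. *)
Lemma separable_frobenius_poly : exists G : {poly M}, x = (map_poly j G).[x ^+ p].
Proof.
have [P Pmin sepP] := separable_min_annihilator; have [P0 Px _] := Pmin.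
pose r := (size P).-1.
have size_modP (G : {poly M}) : (size (G %% P)%R <= r)%N.
  by rewrite -ltnS /r prednK ?size_poly_gt0 // ltn_modpN0.
pose C : 'M[M]_r := \matrix_(l < r) poly_rV ('X^(p * l) %% P).
have evalC v : (map_poly j (rVpoly (v *m C))).[x] = (map_poly j (rVpoly v)).[x ^+ p].
  have -> : rVpoly (v *m C) = \sum_(l < r) v 0 l *: ('X^(p * l) %% P).
    rewrite mulmx_sum_row linear_sum; apply: eq_bigr => l _.
    by rewrite linearZ /= rowK poly_rV_K.
  rewrite rVpoly_sum !rmorph_sum !horner_sum; apply: eq_bigr => l _ /=.
  rewrite !map_polyZ !hornerZ -(horner_modp _ Px) !map_polyXn !hornerXn.
  by rewrite exprM.
have Cu : C \in unitmx.
  rewrite -row_free_unit; apply: inj_row_free => v vC0.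
  have vx : annihilates j (x ^+ p) (rVpoly v).
    by rewrite /annihilates /root -evalC vC0 linear0 rmorph0 horner0.
  have [v0 | v0] := eqVneq (rVpoly v) 0.
    by move/(congr1 (@poly_rV _ r)): v0; rewrite rVpolyK linear0.
  have := frobenius_annihilator_size Pmin sepP v0 vx.
  by rewrite leqNgt (leq_ltn_trans (size_poly _ _)) // /r prednK // size_poly_gt0.
exists (rVpoly (poly_rV ('X %% P) *m invmx C)).
by rewrite -evalC mulmxKV // poly_rV_K // -(horner_modp _ Px) map_polyX hornerX.
Qed.

End SeparableElement.

Section LinearDisjointness.
Variable L : fieldType.

Inductive gen_by (M : fieldType) (j : M -> L) (xs : seq L) : L -> Prop :=
| gen_base m : gen_by j xs (j m)
| gen_elem y : y \in xs -> gen_by j xs y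
| gen_add y z : gen_by j xs y -> gen_by j xs z -> gen_by j xs (y + z)
| gen_mul y z : gen_by j xs y -> gen_by j xs z -> gen_by j xs (y * z).

Lemma gen_by_nil (M : fieldType) (j : {rmorphism M -> L}) y :
  gen_by j [::] y -> exists m, y = j m.
Proof.
elim=> [m | // | z w _ [a ->] _ [b ->] | z w _ [a ->] _ [b ->]]; first by exists m.
- by exists (a + b); rewrite rmorphD.
- by exists (a * b); rewrite rmorphM.
Qed.

Section AdjoinOne.
Variables (M : fieldType) (j : {rmorphism M -> L}) (x : L) (q : {poly M}).
Hypotheses (q_neq0 : q != 0) (qx : root (map_poly j q) x).

Let E := subFExtend j x q.
Let jE : {rmorphism E -> L} := subfx_inj.
Let iE : {rmorphism M -> E} := inj_subfx j x q.

Lemma subfx_inj_base m : jE (iE m) = j m.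
Proof.
change (subfx_inj (subfx_eval j x q m%:P) = j m).
by rewrite (subfx_inj_eval qx q_neq0) map_polyC hornerC.
Qed.

Lemma subfx_inj_poly e : exists c : {poly M}, jE e = (map_poly j c).[x].
Proof.
have [c ->] := subfxE e; exists c.
exact: (subfx_inj_eval qx q_neq0).
Qed.

Lemma subfx_separable : separable_algebraic_ext j -> separable_algebraic_ext jE.
Proof.
move=> sepj y; have [qy [qy0 sep_qy qyy]] := sepj y.
exists (map_poly iE qy); split; rewrite ?map_poly_eq0 ?separable_map //.
by rewrite -map_poly_comp (eq_map_poly subfx_inj_base).
Qed.

Lemma gen_by_subfx xs y : gen_by j (x :: xs) y -> gen_by jE xs y.
Proof.
elim=> [m | z | z w _ gz _ gw | z w _ gz _ gw].
- by rewrite -subfx_inj_base; apply: gen_base.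
- rewrite inE => /predU1P[-> | zxs]; last exact: gen_elem.
  have := gen_base jE xs (subfx_root j x q).
  by rewrite /jE /= (subfx_inj_root qx q_neq0).
- exact: gen_add.
- exact: gen_mul.
Qed.

Lemma pfree_subfx p r (g : 'I_r -> M) : p \in [pchar M] -> separable_poly q ->
  pfree p g -> pfree p (fun l => iE (g l)).
Proof.
move=> pM q_sep gfree k kg0.
have /functional_choice[c kc] := subfx_inj_poly.
have c0 : forall l, (map_poly j (c (k l))).[x] = 0.
  apply: (pfree_adjoin pM q_neq0 q_sep qx gfree).
  transitivity (jE (pcomb p k (fun l => iE (g l)))); last by rewrite kg0 rmorph0.
  by rewrite -pcomb_rmorph; apply: eq_bigr => l _; rewrite kc subfx_inj_base.
by move=> l; apply: (fmorph_inj jE); rewrite kc rmorph0 c0.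
Qed.

End AdjoinOne.

(* Linear disjointness over a finitely generated subring, by induction on
   the generators: each one is adjoined by pfree_subfx, with M(x) as the new
   base field. *)
Lemma pfree_gen_by xs : forall (M : fieldType) (j : {rmorphism M -> L}) p,
  p \in [pchar M] -> separable_algebraic_ext j ->
  forall r (g : 'I_r -> M), pfree p g ->
  forall nu : 'I_r -> L, (forall l, gen_by j xs (nu l)) ->
  pcomb p nu (fun l => j (g l)) = 0 -> forall l, nu l = 0.
Proof.
elim: xs => [|x xs IHxs] M j p pM sepj r g gfree nu nu_gen nug0.
  have /functional_choice[m num] l : exists m, nu l = j m by apply: gen_by_nil.
  move=> l; rewrite num (gfree m) ?rmorph0 //; apply: (fmorph_inj j).
  by rewrite rmorph0 -pcomb_rmorph -nug0; apply: eq_bigr => l' _; rewrite num.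
have [q [q0 q_sep qx]] := sepj x.
have gEfree := pfree_subfx q0 qx pM q_sep gfree.
apply: (IHxs _ _ p _ (subfx_separable q0 qx sepj) _ _ gEfree).
- exact: (rmorph_pchar (inj_subfx j x q) pM).
- by move=> l; apply: gen_by_subfx.
- by rewrite -[RHS]nug0; apply: eq_bigr => l _; rewrite subfx_inj_base.
Qed.

End LinearDisjointness.

(* Linear disjointness of L^p and F over F^p, for L/F separable algebraic:
   a family p-free over F stays p-free over L. *)
Lemma pfree_rmorph (F L : fieldType) (iota : {rmorphism F -> L}) p r (w : 'I_r -> F) :
  p \in [pchar F] -> separable_algebraic_ext iota ->
  pfree p w -> pfree p (fun l => iota (w l)).
Proof.
move=> pF sep wfree nu; apply: (pfree_gen_by pF sep wfree) => l.
by apply: gen_elem; apply: map_f (mem_enum _ l).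
Qed.

Definition transporter (K : fieldType) s r T n (A : 'M[K]_(s, r))
    (B : 'I_n -> 'M[K]_(T, r)) : 'M[K]_T :=
  (\bigcap_(j < n) kermx (B j *m cokermx A))%MS.

Lemma sub_transporterP (K : fieldType) s r T n (A : 'M[K]_(s, r))
    (B : 'I_n -> 'M[K]_(T, r)) m (z : 'M[K]_(m, T)) :
  reflect (forall j, (z *m B j <= A)%MS) (z <= transporter A B)%MS.
Proof.
apply: (iffP sub_bigcapmxP) => zB j; last by rewrite sub_kermx mulmxA -submxE zB.
by have := zB j isT; rewrite sub_kermx mulmxA -submxE.
Qed.

Lemma transporter_map (F L : fieldType) (f : {rmorphism F -> L}) s r T n
    (A : 'M[F]_(s, r)) (B : 'I_n -> 'M[F]_(T, r)) m (z : 'M[L]_(m, T)) :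
  (z <= transporter (map_mx f A) (fun j => map_mx f (B j)))%MS ->
  (z <= map_mx f (transporter A B))%MS.
Proof.
move=> /sub_transporterP zB; apply: (big_rec (fun X => z <= map_mx f X)%MS).
  by rewrite map_mx1 submx1.
move=> j X _ zX; rewrite map_capmx sub_capmx zX andbT.
by rewrite map_kermx map_mxM map_cokermx sub_kermx mulmxA -submxE zB.
Qed.

Section TransporterSpan.
Variables (K : fieldType) (p : nat).
Hypothesis pK : p \in [pchar K].
Variables (n r T : nat) (om : 'I_r -> K) (u w : 'I_n -> K) (G : 'I_T -> K).
Variables (A : 'M[K]_(n, r)) (B : 'I_n -> 'M[K]_(T, r)).
Hypotheses (wA : forall i, w i = pcomb p (A i) om)
           (uB : forall j t, G t * u j = pcomb p (B j t) om).

Lemma pcomb_scaled_coord (z : 'rV[K]_T) j :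
  pcomb p (z 0) G * u j = pcomb p ((z *m B j) 0) om.
Proof.
rewrite (pcomb_mulmx pK) mulrC pcomb_scale; apply: eq_bigr => t _.
by rewrite -uB (mulrC (u j)).
Qed.

Lemma transporter_pspan (z : 'rV[K]_T) : (z <= transporter A B)%MS ->
  exists R : 'M[K]_n, forall j, pcomb p (z 0) G * u j = pcomb p (R j) w.
Proof.
move=> /sub_transporterP zB.
have /functional_choice[Y BY] j : exists Y : 'rV[K]_n, z *m B j = Y *m A.
  exact/submxP/zB.
exists (\matrix_(j, i) Y j 0 i) => j.
rewrite pcomb_scaled_coord BY (pcomb_mulmx pK).
by apply: eq_bigr => i _; rewrite wA !mxE.
Qed.

Lemma pspan_transporter (z : 'rV[K]_T) (R : 'M[K]_n) : pfree p om ->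
  (forall j, pcomb p (z 0) G * u j = pcomb p (R j) w) -> (z <= transporter A B)%MS.
Proof.
move=> omfree zR; apply/sub_transporterP => j.
suff -> : z *m B j = row j R *m A by apply: submxMl.
apply/rowP => l; apply: (pfree_inj pK omfree).
rewrite -pcomb_scaled_coord zR (pcomb_mulmx pK) pcomb_row.
by apply: eq_bigr => i _; rewrite wA.
Qed.

End TransporterSpan.

Lemma pcomb_rows_neq0 (F L : fieldType) (f : {rmorphism F -> L}) p m T
    (Z : 'M[F]_(m, T)) (G : 'I_T -> F) (z : 'rV[L]_T) :
  p \in [pchar L] -> (z <= map_mx f Z)%MS ->
  pcomb p (z 0) (fun t => f (G t)) != 0 -> exists k, pcomb p (Z k) G != 0.
Proof.
move=> pL /submxP[W ->] zG; apply: NNPP => noK; case/negP: zG.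
rewrite (pcomb_mulmx pL).
have Zk0 k : pcomb p (map_mx f Z k) (fun t => f (G t)) = 0.
  rewrite pcomb_map_mx; apply/eqP; rewrite fmorph_eq0.
  by apply: contra_notT noK => ?; exists k.
apply/eqP; rewrite {1}/pcomb big1 // => k _.
by rewrite Zk0 mulr0.
Qed.

Section Descent.
Variables (F L : fieldType) (iota : {rmorphism F -> L}) (p : nat).
Hypotheses (pF : p \in [pchar F]) (sep : separable_algebraic_ext iota).
Let pL : p \in [pchar L] := rmorph_pchar iota pF.

(* Writing x = sum_t G_t (x^t)^p, the condition on (x^t)_t is a system of
   linear equations defined over F, and x^t is replaced by a solution over F
   on which sum_t G_t z_t^p does not vanish. *)
Lemma scaled_pspan_descent n (u w : 'I_n -> F) (x : L) (R : 'M[L]_n) :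
  x != 0 -> (forall j, x * iota (u j) = pcomb p (R j) (fun i => iota (w i))) ->
  exists c, c != 0 /\ exists R' : 'M[F]_n, forall j, c * u j = pcomb p (R' j) w.
Proof.
move=> x0 uR.
have [G xG] : exists G, x = (map_poly iota G).[x ^+ p].
  by have [q [q0 q_sep qx]] := sep x; apply: separable_frobenius_poly q_sep qx.
pose T := size G; pose Gt (t : 'I_T) := G`_t.
pose z : 'rV[L]_T := \row_t x ^+ t.
have xE : x = pcomb p (z 0) (fun t => iota (Gt t)).
  rewrite {1}xG horner_coef size_map_poly; apply: eq_bigr => t _.
  by rewrite coef_map mxE exprAC mulrC.
have [r [om [omfree spanned]]] := pfree_basis pF
  ([seq Gt t * u j | t <- enum 'I_T, j <- enum 'I_n] ++ [seq w i | i <- enum 'I_n]).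
have [A wA] : exists A : 'M[F]_(n, r), forall i, w i = pcomb p (A i) om.
  apply: pcoord_mx => i; apply: spanned.
  by rewrite mem_cat; apply/orP; right; apply: map_f; rewrite mem_enum.
have /functional_choice[B uB] j :
    exists Bj : 'M[F]_(T, r), forall t, Gt t * u j = pcomb p (Bj t) om.
  apply: pcoord_mx => t; apply: spanned; rewrite mem_cat; apply/orP; left.
  by apply: (allpairs_f (fun t j => Gt t * u j)); rewrite mem_enum.
have wAL i : iota (w i) = pcomb p (map_mx iota A i) (fun l => iota (om l)).
  by rewrite wA pcomb_map_mx.
have uBL j t :
    iota (Gt t) * iota (u j) = pcomb p (map_mx iota (B j) t) (fun l => iota (om l)).
  by rewrite -rmorphM uB pcomb_map_mx.
have zR j : pcomb p (z 0) (fun t => iota (Gt t)) * iota (u j) =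
            pcomb p (R j) (fun i => iota (w i)) by rewrite -xE.
have xZ : (z <= map_mx iota (transporter A B))%MS.
  apply: transporter_map.
  exact: (pspan_transporter pL wAL uBL (pfree_rmorph pF sep omfree) zR).
have [k Gk] : exists k, pcomb p (transporter A B k) Gt != 0.
  by apply: (pcomb_rows_neq0 pL xZ); rewrite -xE.
have [R' uR'] := transporter_pspan pF wA uB (row_sub k (transporter A B)).
exists (pcomb p (transporter A B k) Gt); split=> //.
by exists R' => j; rewrite -pcomb_row uR'.
Qed.

End Descent.

Theorem corollary5p3 (F L : fieldType) (p : nat) (iota : {rmorphism F -> L})
  (n : nat) (a b : 'I_n -> F) :
  (p \in [pchar F])%R -> separable_algebraic_ext iota ->
  (pform_similar p a b <->
   pform_similar p (pform_ext iota a) (pform_ext iota b)).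
Proof.
move=> pF sep; have pL := rmorph_pchar iota pF.
rewrite (pform_similarP pF) (pform_similarP pL) /pform_ext; split.
  move=> [c [c0 [T Tu aT]]]; exists (iota c); split; first by rewrite fmorph_eq0.
  exists (map_mx iota T); first by rewrite map_unitmx.
  by move=> i; rewrite aT -pcomb_rmorph; apply: eq_bigr => j _; rewrite mxE rmorphM.
move=> [d [d0 [S Su aS]]].
have abS i : d^-1 * iota (a i) = pcomb p (S i) (fun j => iota (b j)).
  by rewrite aS -pcomb_scale mulKf.
have baS := pcomb_invmx pL Su aS.
have [c' [c'0 [R' aR']]] := scaled_pspan_descent pF sep (invr_neq0 d0) abS.
have [c [c0 [R bR]]] := scaled_pspan_descent pF sep d0 baS.
have [T Tu bT] := mutual_pspan_unitmx pF c0 c'0 bR aR'.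
exists c; split=> //; exists (invmx T); first by rewrite unitmx_inv.
by move=> i; rewrite (pcomb_invmx pF Tu bT i).
Qed.
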